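(* For every finite zero-set $\mathcal Z$, every integer $k\ge0$ and every $(\alpha,\beta)\in[0,1]^2$, $$I(\alpha,\beta,\mathcal Z)\ge\gamma(\mathcal Z^{\swarrow k})\Big(1-\max(\alpha,\beta)\Big(1+\frac1{k+1}\Big)\Big).$$
   Context: $\mathbb Z_+=\{0,1,2,\dots\}$, $R_{a,b}=([0,a-1]\times[0,b-1])\cap\mathbb Z_+^2$; a zero-set is a union of such rectangles. $\mathrm{row}(x,A),\mathrm{col}(x,A)$ count points of $A$ on the horizontal/vertical line through $x$; $\mathcal T(A)=A\cup\{x\notin A:(\mathrm{row}(x,A),\mathrm{col}(x,A))\notin\mathcal Z\}$; $A$ spans if $\bigcup_t\mathcal T^t(A)=\mathbb Z_+^2$; $\gamma(\mathcal Z)$ is the minimal size of a finite spanning set. $\mathcal Z^{\swarrow k}=\{(u-k,v-k):(u,v)\in\mathcal Z,u\ge k,v\ge k\}$. Large deviation rate: for $\alpha,\beta\ge0$, as $p\to0$ let integers $N,M\to\infty$ with $\log N\sim-\alpha\log p$, $\log M\sim-\beta\log p$; the initial set contains each point of $R_{N,M}$ independently with probability $p$; $I(\alpha,\beta,\mathcal Z)=\lim_{p\to0}\log P_p(\text{initial set spans})/\log p$ (this limit exists). *)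

From Stdlib Require Import Reals List Arith ClassicalEpsilon.
Import ListNotations.
Open Scope R_scope.

Definition point := (nat * nat)%type.
Definition pset := point -> Prop.

(* A zero-set is a subset of Z_+^2; a FINITE zero-set is a finite union of
   rectangles R_{a,b} = [0,a-1] x [0,b-1], given by the list of its (a,b). *)
Definition rect (a b : nat) : pset := fun x => (fst x < a)%nat /\ (snd x < b)%nat.
Definition zero_set_of (rs : list (nat * nat)) : pset :=
  fun x => exists r, In r rs /\ rect (fst r) (snd r) x.

Definition shiftZ (Z : pset) (k : nat) : pset :=
  fun x => Z (fst x + k, snd x + k)%nat.

Definition has_card (S : pset) (n : nat) : Prop :=
  exists l : list point, NoDup l /\ length l = n /\ forall y, In y l <-> S y.

Definition row_line (x : point) (A : pset) : pset := fun y => A y /\ snd y = snd x.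
Definition col_line (x : point) (A : pset) : pset := fun y => A y /\ fst y = fst x.

(* T(A) = A ∪ {x ∉ A : (row(x,A), col(x,A)) ∉ Z}.  If a line carries infinitely
   many points of A, the pair of counts is not in Z ⊆ Z_+^2. *)
Definition T (Z : pset) (A : pset) : pset :=
  fun x => A x \/
    (~ A x /\ ~ (exists u v, has_card (row_line x A) u /\
                             has_card (col_line x A) v /\ Z (u, v))).

Fixpoint Titer (Z : pset) (t : nat) (A : pset) : pset :=
  match t with
  | O => A
  | S t' => T Z (Titer Z t' A)
  end.

Definition spans (Z : pset) (A : pset) : Prop :=
  forall x, exists t, Titer Z t A x.

Definition in_list (l : list point) : pset := fun x => In x l.

Definition is_gamma (Z : pset) (g : nat) : Prop :=
  (exists l, NoDup l /\ length l = g /\ spans Z (in_list l)) /\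
  (forall l, NoDup l -> spans Z (in_list l) -> (g <= length l)%nat).

Definition grid (N M : nat) : list point := list_prod (seq 0 N) (seq 0 M).

Fixpoint powerset {X} (l : list X) : list (list X) :=
  match l with
  | [] => [[]]
  | x :: l' => let P := powerset l' in map (cons x) P ++ P
  end.

Definition indicator (P : Prop) : R :=
  if excluded_middle_informative P then 1 else 0.

(* P_p(initial set spans), the initial set containing each point of R_{N,M}
   independently with probability p: sum over all subsets S of R_{N,M}. *)
Definition prob_span (Z : pset) (p : R) (N M : nat) : R :=
  fold_right Rplus 0
    (map (fun S => indicator (spans Z (in_list S)) *
                   p ^ length S * (1 - p) ^ (N * M - length S)%nat)
         (powerset (grid N M))).

Definition tends_to_infty (u : nat -> nat) : Prop :=
  forall B : nat, exists n0, forall n, (n0 <= n)%nat -> (B <= u n)%nat.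

From Stdlib Require Import Reals List Arith.
From Stdlib Require Import Lia Lra Classical ClassicalEpsilon Bool FinFun.
Import ListNotations.
Open Scope R_scope.

(* Let [a = 1 + 1/(k+1)]. If the random set [S] spans [Z], then the points of
   [S] lying on a row or column with more than [k] points of [S] span the
   shifted zero-set [Z^{swarrow k}], since every line holds at most [k] of the
   discarded points; hence there are at least [g = gamma(Z^{swarrow k})] of
   them, and greedily one extracts a set [W] of size [s] in [[g, g+k]] all of
   whose points are still heavy in [W]. Such a set meets at most [a s] rows
   and columns, so in an [L x L] box there are at most [(s!)^2 L^(a s)] of
   them, and the union bound gives [P(span) <= C (p L^a)^g]. Taking
   logarithms with [L = p^(-max(alpha, beta) + o(1))] yields the theorem. *)

(** * Finite sums over lists *)

Definition rsum {A} (f : A -> R) (l : list A) : R := fold_right Rplus 0 (map f l).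

Lemma rsum_nil {A} (f : A -> R) : rsum f [] = 0.
Proof. reflexivity. Qed.

Lemma rsum_cons {A} (f : A -> R) x l : rsum f (x :: l) = f x + rsum f l.
Proof. reflexivity. Qed.

Lemma rsum_app {A} (f : A -> R) l1 l2 : rsum f (l1 ++ l2) = rsum f l1 + rsum f l2.
Proof.
  induction l1 as [|x l1 IH]; [rewrite rsum_nil; simpl; ring|].
  simpl. rewrite !rsum_cons, IH; ring.
Qed.

Lemma rsum_map {A B} (f : B -> R) (g : A -> B) l : rsum f (map g l) = rsum (fun x => f (g x)) l.
Proof. unfold rsum; rewrite map_map; reflexivity. Qed.

Lemma rsum_flat_map {A B} (f : B -> R) (g : A -> list B) l :
  rsum f (flat_map g l) = rsum (fun x => rsum f (g x)) l.
Proof. induction l as [|x l IH]; simpl; auto. rewrite rsum_app, IH, rsum_cons. reflexivity. Qed.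

Lemma rsum_ext_in {A} (f g : A -> R) l : (forall x, In x l -> f x = g x) -> rsum f l = rsum g l.
Proof.
  induction l as [|x l IH]; intros H; auto.
  rewrite !rsum_cons, H, IH; simpl; auto. intros; apply H; simpl; auto.
Qed.

Lemma rsum_le {A} (f g : A -> R) l : (forall x, In x l -> f x <= g x) -> rsum f l <= rsum g l.
Proof.
  induction l as [|x l IH]; intros H; [rewrite !rsum_nil; lra|]. rewrite !rsum_cons.
  apply Rplus_le_compat; [apply H | apply IH; intros; apply H]; simpl; auto.
Qed.

Lemma rsum_scal {A} (c : R) (f : A -> R) l : rsum (fun x => c * f x) l = c * rsum f l.
Proof. induction l as [|x l IH]; [rewrite !rsum_nil; ring|]. rewrite !rsum_cons, IH; ring. Qed.

Lemma rsum_plus {A} (f g : A -> R) l : rsum (fun x => f x + g x) l = rsum f l + rsum g l.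
Proof. induction l as [|x l IH]; [rewrite !rsum_nil; ring|]. rewrite !rsum_cons, IH; ring. Qed.

Lemma rsum_const {A} (c : R) (l : list A) : rsum (fun _ => c) l = INR (length l) * c.
Proof.
  induction l as [|x l IH]; [rewrite rsum_nil; simpl; ring|].
  rewrite rsum_cons, IH; simpl length; rewrite S_INR; ring.
Qed.

Lemma rsum_nonneg {A} (f : A -> R) l : (forall x, In x l -> 0 <= f x) -> 0 <= rsum f l.
Proof.
  intros H. apply Rle_trans with (rsum (fun _ => 0) l); [rewrite rsum_const; lra|].
  apply rsum_le; auto.
Qed.

Lemma rsum_ge_term {A} (f : A -> R) l x :
  (forall y, In y l -> 0 <= f y) -> In x l -> f x <= rsum f l.
Proof.
  induction l as [|y l IH]; intros H Hx; [destruct Hx|]. rewrite rsum_cons.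
  destruct Hx as [<-|Hx].
  - assert (0 <= rsum f l) by (apply rsum_nonneg; intros; apply H; simpl; auto). lra.
  - assert (0 <= f y) by (apply H; simpl; auto).
    assert (f x <= rsum f l) by (apply IH; auto; intros; apply H; simpl; auto). lra.
Qed.

Lemma rsum_swap {A B} (f : A -> B -> R) l1 l2 :
  rsum (fun x => rsum (f x) l2) l1 = rsum (fun y => rsum (fun x => f x y) l1) l2.
Proof.
  induction l1 as [|x l1 IH].
  - unfold rsum at 1; simpl. rewrite (rsum_ext_in _ (fun _ => 0)), rsum_const by reflexivity. ring.
  - rewrite rsum_cons, IH, <- rsum_plus. apply rsum_ext_in. intros; rewrite rsum_cons; ring.
Qed.

Lemma rsum_list_prod {A B} (f : A -> R) (g : B -> R) l1 l2 :
  rsum (fun x => f (fst x) * g (snd x)) (list_prod l1 l2) = rsum f l1 * rsum g l2.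
Proof.
  induction l1 as [|x l1 IH]; [rewrite !rsum_nil; simpl; rewrite rsum_nil; ring|].
  simpl. rewrite rsum_app, IH, rsum_map, rsum_cons. simpl. rewrite rsum_scal. ring.
Qed.

Lemma indicator_true (P : Prop) : P -> indicator P = 1.
Proof. unfold indicator; destruct excluded_middle_informative; tauto. Qed.

Lemma indicator_false (P : Prop) : ~ P -> indicator P = 0.
Proof. unfold indicator; destruct excluded_middle_informative; tauto. Qed.

Lemma indicator_iff (P Q : Prop) : (P <-> Q) -> indicator P = indicator Q.
Proof. unfold indicator; do 2 destruct excluded_middle_informative; tauto. Qed.

Lemma indicator_bounds (P : Prop) : 0 <= indicator P <= 1.
Proof. unfold indicator; destruct excluded_middle_informative; lra. Qed.

(** * Random subsets *)

Lemma rsum_powerset_cons {A} (f : list A -> R) x l :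
  rsum f (powerset (x :: l)) = rsum (fun X => f (x :: X)) (powerset l) + rsum f (powerset l).
Proof. simpl. rewrite rsum_app, rsum_map. reflexivity. Qed.

Lemma in_powerset_incl {A} (l X : list A) : In X (powerset l) -> incl X l.
Proof.
  revert X; induction l as [|x l IH]; simpl; intros X H.
  - destruct H as [<-|[]]. apply incl_nil_l.
  - apply in_app_or in H as [H|H].
    + apply in_map_iff in H as [X' [<- HX']]. apply incl_cons; [simpl; auto|].
      apply incl_tl, IH, HX'.
    + apply incl_tl, IH, H.
Qed.

Lemma in_powerset_NoDup {A} (l X : list A) : NoDup l -> In X (powerset l) -> NoDup X.
Proof.
  revert X; induction l as [|x l IH]; simpl; intros X Hl H; inversion Hl; subst.
  - destruct H as [<-|[]]. constructor.
  - apply in_app_or in H as [H|H]; auto.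
    apply in_map_iff in H as [X' [<- HX']]. constructor; auto.
    intros Hx. apply (in_powerset_incl _ _ HX') in Hx. contradiction.
Qed.

Lemma in_powerset_self {A} (l : list A) : In l (powerset l).
Proof. induction l; simpl; auto. apply in_or_app; left; apply in_map; auto. Qed.

Definition point_eq_dec : forall x y : point, {x = y} + {x <> y}.
Proof. decide equality; apply Nat.eq_dec. Defined.

Definition subset_weight (p : R) (n : nat) (X : list point) : R :=
  p ^ length X * (1 - p) ^ (n - length X).

Lemma subset_weight_nonneg p n X : 0 < p < 1 -> 0 <= subset_weight p n X.
Proof. intros Hp. unfold subset_weight. apply Rmult_le_pos; apply pow_le; lra. Qed.

Lemma rsum_powerset_weight_cons (F : list point -> R) p x l :
  NoDup (x :: l) ->
  rsum (fun X => F X * subset_weight p (length (x :: l)) X) (powerset (x :: l))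
  = p * rsum (fun X => F (x :: X) * subset_weight p (length l) X) (powerset l)
    + (1 - p) * rsum (fun X => F X * subset_weight p (length l) X) (powerset l).
Proof.
  intros Hl. inversion Hl as [|? ? _ Hl']; subst.
  rewrite rsum_powerset_cons, <- !rsum_scal. unfold subset_weight. f_equal; apply rsum_ext_in.
  - intros X _. simpl length. rewrite Nat.sub_succ. simpl; ring.
  - intros X HX. assert (Hlen : (length X <= length l)%nat)
      by exact (NoDup_incl_length (in_powerset_NoDup _ _ Hl' HX) (in_powerset_incl _ _ HX)).
    simpl length. rewrite (Nat.sub_succ_l _ _ Hlen). simpl; ring.
Qed.

Lemma incl_cons_r_notin (x : point) t X : ~ In x t -> (incl t (x :: X) <-> incl t X).
Proof.
  intros Hx. split; intros H z Hz; [|right; auto].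
  destruct (H z Hz) as [<-|]; [contradiction|auto].
Qed.

Lemma sum_powerset_superset (p : R) (l t : list point) :
  NoDup l -> NoDup t -> incl t l ->
  rsum (fun X => indicator (incl t X) * subset_weight p (length l) X) (powerset l) = p ^ length t.
Proof.
  revert t; induction l as [|x l IH]; intros t Hl Ht Htl.
  - destruct t as [|y t]; [|destruct (Htl y (or_introl eq_refl))].
    simpl. rewrite rsum_cons, indicator_true by apply incl_nil_l. unfold subset_weight, rsum; simpl; ring.
  - rewrite rsum_powerset_weight_cons by exact Hl.
    inversion Hl as [|? ? Hx Hl']; subst.
    destruct (in_dec point_eq_dec x t) as [Hxt|Hxt].
    + destruct (in_split _ _ Hxt) as [t1 [t2 ->]].
      assert (Ht' : NoDup (t1 ++ t2)) by exact (NoDup_remove_1 _ _ _ Ht).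
      assert (Hxt' : ~ In x (t1 ++ t2)) by exact (NoDup_remove_2 _ _ _ Ht).
      assert (Hsub : incl (t1 ++ t2) l).
      { intros z Hz. destruct (Htl z) as [<-|]; [|contradiction|auto].
        apply in_app_or in Hz; apply in_or_app; simpl; tauto. }
      rewrite (rsum_ext_in (fun X => indicator (incl _ (x :: X)) * _)
          (fun X => indicator (incl (t1 ++ t2) X) * subset_weight p (length l) X)).
      2:{ intros X _. f_equal. apply indicator_iff. rewrite <- (incl_cons_r_notin x _ X Hxt').
          split; intros H z Hz.
          - apply H. apply in_app_or in Hz; apply in_or_app; simpl; tauto.
          - apply in_app_or in Hz as [Hz|[<-|Hz]]; [| left; auto |]; apply H, in_or_app; auto. }
      rewrite (rsum_ext_in (fun X => indicator (incl (t1 ++ x :: t2) X) * _) (fun _ => 0)).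
      2:{ intros X HX. rewrite indicator_false; [ring|]. intros H.
          apply Hx, (in_powerset_incl _ _ HX), H, in_or_app; simpl; auto. }
      rewrite IH, rsum_const, !length_app by auto. simpl length.
      rewrite Nat.add_succ_r. simpl; ring.
    + rewrite (rsum_ext_in (fun X => indicator (incl t (x :: X)) * _)
          (fun X => indicator (incl t X) * subset_weight p (length l) X)).
      2:{ intros X _. f_equal. apply indicator_iff, incl_cons_r_notin, Hxt. }
      rewrite IH; auto; [ring|]. intros z Hz. destruct (Htl z Hz) as [<-|]; auto. contradiction.
Qed.

(** * Counting point sets by the lines they meet *)

Fixpoint tuples (l : list point) (n : nat) : list (list point) :=
  match n with
  | O => [[]]
  | S n' => flat_map (fun t => map (fun x => x :: t) l) (tuples l n')
  end.

Lemma in_tuples_iff l n t : In t (tuples l n) <-> length t = n /\ incl t l.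
Proof.
  revert t; induction n as [|n IH]; intros t; simpl.
  - split; [intros [<-|[]]; split; [reflexivity|apply incl_nil_l]|].
    intros [Ht _]; left; symmetry; apply length_zero_iff_nil, Ht.
  - rewrite in_flat_map. split.
    + intros [t' [Ht' Hx]]. apply in_map_iff in Hx as [x [<- Hx]].
      apply IH in Ht' as [<- Hi]. split; [reflexivity|]. apply incl_cons; auto.
    + intros [Hlen Hi]. destruct t as [|x t']; [discriminate|].
      exists t'. split.
      * apply IH. split; [simpl in Hlen; lia|]. intros z Hz; apply Hi; simpl; auto.
      * apply in_map_iff. exists x. split; [reflexivity|]. apply Hi; simpl; auto.
Qed.

Definition nlines (f : point -> nat) (t : list point) : nat :=
  length (nodup Nat.eq_dec (map f t)).

Definition new_line_weight (mu : R) (i : nat) (X : list nat) : R :=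
  if in_dec Nat.eq_dec i X then 1 else mu.

Lemma pow_nlines_cons mu f x t :
  mu ^ nlines f (x :: t) = new_line_weight mu (f x) (map f t) * mu ^ nlines f t.
Proof. unfold nlines, new_line_weight. simpl. destruct in_dec; simpl; ring. Qed.

Lemma rsum_mem_le (X a : list nat) :
  NoDup a -> rsum (fun i => if in_dec Nat.eq_dec i X then 1 else 0) a <= INR (length X).
Proof.
  intros Ha.
  set (mem := fun i => if in_dec Nat.eq_dec i X then true else false).
  assert (Hcount : rsum (fun i => if in_dec Nat.eq_dec i X then 1 else 0) a
                   = INR (length (filter mem a))).
  { clear Ha. induction a as [|i a IH]; [reflexivity|].
    rewrite rsum_cons, IH. unfold mem; simpl. destruct in_dec; simpl length; rewrite ?S_INR; ring. }
  rewrite Hcount. apply le_INR, NoDup_incl_length; [apply NoDup_filter, Ha|].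
  intros i Hi. apply filter_In in Hi as [_ Hi]. unfold mem in Hi. destruct in_dec; [auto|discriminate].
Qed.

Lemma rsum_new_line_weight_le (mu : R) (X : list nat) (N : nat) :
  0 <= mu -> INR N * mu <= 1 ->
  rsum (fun i => new_line_weight mu i X) (seq 0 N) <= 1 + INR (length X).
Proof.
  intros Hmu HN.
  apply Rle_trans with (rsum (fun i => mu + if in_dec Nat.eq_dec i X then 1 else 0) (seq 0 N)).
  - apply rsum_le. intros i _. unfold new_line_weight. destruct in_dec; lra.
  - rewrite rsum_plus, rsum_const, length_seq.
    assert (H := rsum_mem_le X (seq 0 N) (seq_NoDup _ _)). lra.
Qed.

Definition line_weight (mu : R) (t : list point) : R := mu ^ (nlines fst t + nlines snd t).

(* Adding a point to [t] either opens a new line, paying a factor [mu], or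
   reuses one of the at most [|t|] lines already met, so each coordinate
   contributes a factor at most [N mu + |t| <= 1 + |t|]. *)
Lemma rsum_line_weight_cons_le (mu : R) N M t :
  0 <= mu -> INR N * mu <= 1 -> INR M * mu <= 1 ->
  rsum (fun x => line_weight mu (x :: t)) (grid N M) <= (1 + INR (length t)) ^ 2 * line_weight mu t.
Proof.
  intros Hmu HN HM. unfold grid, line_weight.
  rewrite (rsum_ext_in _ (fun x => mu ^ (nlines fst t + nlines snd t) *
      (new_line_weight mu (fst x) (map fst t) * new_line_weight mu (snd x) (map snd t)))).
  2:{ intros x _. cbv beta. rewrite !pow_add, !pow_nlines_cons. unfold point. ring. }
  rewrite rsum_scal, (rsum_list_prod (fun i => new_line_weight mu i (map fst t))
                                      (fun j => new_line_weight mu j (map snd t))).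
  assert (H1 := rsum_new_line_weight_le mu (map fst t) N Hmu HN).
  assert (H2 := rsum_new_line_weight_le mu (map snd t) M Hmu HM).
  rewrite length_map in H1, H2.
  assert (Hw : forall X i, 0 <= new_line_weight mu i X)
    by (intros; unfold new_line_weight; destruct in_dec; lra).
  assert (0 <= mu ^ (nlines fst t + nlines snd t)) by (apply pow_le; lra).
  assert (0 <= rsum (fun i => new_line_weight mu i (map fst t)) (seq 0 N)) by (apply rsum_nonneg; auto).
  assert (0 <= rsum (fun j => new_line_weight mu j (map snd t)) (seq 0 M)) by (apply rsum_nonneg; auto).
  rewrite Rmult_comm. simpl. rewrite Rmult_1_r.
  apply Rmult_le_compat_r; auto. apply Rmult_le_compat; auto.
Qed.

Lemma rsum_line_weight_tuples_le (mu : R) N M s :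
  0 <= mu -> INR N * mu <= 1 -> INR M * mu <= 1 ->
  rsum (line_weight mu) (tuples (grid N M) s) <= INR (fact s) ^ 2.
Proof.
  intros Hmu HN HM. induction s as [|s IH].
  - simpl. rewrite rsum_cons, rsum_nil. unfold line_weight, nlines; simpl. lra.
  - simpl tuples. rewrite rsum_flat_map.
    apply Rle_trans with (rsum (fun t => (1 + INR s) ^ 2 * line_weight mu t) (tuples (grid N M) s)).
    + apply rsum_le. intros t Ht. rewrite rsum_map.
      apply in_tuples_iff in Ht as [<- _]. apply rsum_line_weight_cons_le; auto.
    + rewrite rsum_scal, fact_simpl, mult_INR, S_INR, Rpow_mult_distr, Rplus_comm.
      apply Rmult_le_compat_l; auto. apply pow_le. assert (0 <= INR s) by apply pos_INR. lra.
Qed.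

(** * Heavy points *)

Lemma filter_filter_andb {A} (a b : A -> bool) l :
  filter a (filter b l) = filter (fun y => b y && a y) l.
Proof. induction l as [|x l IH]; simpl; auto. destruct (b x); simpl; [destruct (a x); simpl|]; rewrite IH; auto. Qed.

Lemma length_filter_le_imp {A} (a b : A -> bool) l :
  (forall x, In x l -> a x = true -> b x = true) -> (length (filter a l) <= length (filter b l))%nat.
Proof.
  induction l as [|x l IH]; intros H; simpl; auto.
  assert (Hl : (length (filter a l) <= length (filter b l))%nat) by (apply IH; intros; apply H; simpl; auto).
  destruct (a x) eqn:E; [rewrite (H x (or_introl eq_refl) E); simpl; lia|].
  destruct (b x); simpl; lia.
Qed.

Definition line_count (f : point -> nat) (l : list point) (x : point) : nat :=
  length (filter (fun y => f y =? f x) l).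

Lemma line_count_app f l1 l2 x : line_count f (l1 ++ l2) x = (line_count f l1 x + line_count f l2 x)%nat.
Proof. unfold line_count; rewrite filter_app, length_app; auto. Qed.

Lemma line_count_same_line f l x y : f x = f y -> line_count f l x = line_count f l y.
Proof. intros H; unfold line_count; rewrite H; auto. Qed.

Lemma line_count_filter_le f P l x : (line_count f (filter P l) x <= line_count f l x)%nat.
Proof.
  unfold line_count. rewrite filter_filter_andb.
  apply length_filter_le_imp. intros y _ H. apply andb_true_iff in H; tauto.
Qed.

Lemma line_count_filter_full f (P : point -> bool) l x :
  (forall y, f y = f x -> P y = true) -> line_count f (filter P l) x = line_count f l x.
Proof.
  intros HP. unfold line_count. rewrite filter_filter_andb. f_equal. apply filter_ext. intros y.
  destruct (f y =? f x) eqn:E; [apply Nat.eqb_eq, HP in E; rewrite E|apply andb_false_r]; auto.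
Qed.

Lemma line_count_on_line f Q x : (forall q, In q Q -> f q = f x) -> line_count f Q x = length Q.
Proof.
  induction Q as [|q Q IH]; intros H; auto. unfold line_count in *; simpl.
  rewrite (H q (or_introl eq_refl)), Nat.eqb_refl. simpl. f_equal. apply IH; intros; apply H; simpl; auto.
Qed.

Lemma nlines_le_length f l : (nlines f l <= length l)%nat.
Proof.
  unfold nlines. rewrite <- (length_map f l). generalize (map f l).
  induction l0 as [|a l0 IH]; simpl; auto. destruct in_dec; simpl; lia.
Qed.

Lemma nlines_filter_split f (P : point -> bool) l :
  (nlines f l <= nlines f (filter P l) + nlines f (filter (fun x => negb (P x)) l))%nat.
Proof.
  unfold nlines. rewrite <- length_app. apply NoDup_incl_length; [apply NoDup_nodup|].
  intros z Hz. apply nodup_In, in_map_iff in Hz as [x [<- Hx]].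
  apply in_or_app. destruct (P x) eqn:E; [left|right];
    apply nodup_In, in_map, filter_In; rewrite E; auto.
Qed.

Lemma nlines_mul_le_length f k l :
  (forall x, In x l -> k < line_count f l x)%nat -> ((k + 1) * nlines f l <= length l)%nat.
Proof.
  remember (length l) as n eqn:Hn. revert l Hn.
  induction n as [n IH] using lt_wf_ind. intros l Hn H. destruct l as [|x l']; [subst; unfold nlines; simpl; lia|].
  set (l := x :: l') in *.
  set (rest := filter (fun y => negb (f y =? f x)) l).
  assert (Hsplit := filter_length (fun y => f y =? f x) l). cbv beta in Hsplit. fold rest in Hsplit.
  assert (Hx : (k < line_count f l x)%nat) by (apply H; left; auto). unfold line_count in Hx.
  assert (Hlines : (nlines f l <= 1 + nlines f rest)%nat).
  { unfold nlines. change (1 + _)%nat with (length (f x :: nodup Nat.eq_dec (map f rest))).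
    apply NoDup_incl_length; [apply NoDup_nodup|]. intros z Hz. apply nodup_In, in_map_iff in Hz as [y [<- Hy]].
    destruct (Nat.eq_dec (f y) (f x)) as [E|E]; [left; auto|right].
    apply nodup_In, in_map, filter_In. split; auto. apply Nat.eqb_neq in E; rewrite E; auto. }
  assert (Hrest : ((k + 1) * nlines f rest <= length rest)%nat).
  { apply (IH (length rest)); [lia|auto|]. intros y Hy.
    apply filter_In in Hy as [Hy Hne]. unfold rest.
    rewrite line_count_filter_full; [apply H, Hy|]. intros z Hz. rewrite Hz. exact Hne. }
  nia.
Qed.

Lemma nlines_mul_le_heavy_part f k l :
  ((k + 1) * nlines f (filter (fun y => k <? line_count f l y) l)
    <= length (filter (fun y => k <? line_count f l y) l))%nat.
Proof.
  apply nlines_mul_le_length. intros x Hx. apply filter_In in Hx as [_ Hx].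
  apply Nat.ltb_lt in Hx. rewrite line_count_filter_full; auto.
  intros y Hy. apply Nat.ltb_lt. rewrite (line_count_same_line _ _ y x Hy). auto.
Qed.

Definition heavy (k : nat) (l : list point) (x : point) : Prop :=
  (k < line_count snd l x)%nat \/ (k < line_count fst l x)%nat.

Definition all_heavy (k : nat) (l : list point) : Prop := forall x, In x l -> heavy k l x.

(* Rows and columns are charged separately: a row-heavy point pays [1/(k+1)]
   for its row, a row-light point is column-heavy and pays a whole row but
   only [1/(k+1)] for its column. *)
Lemma nlines_all_heavy_le k t :
  all_heavy k t -> ((k + 1) * (nlines fst t + nlines snd t) <= (k + 2) * length t)%nat.
Proof.
  intros H.
  set (hr := fun y => (k <? line_count snd t y)%nat). set (hc := fun y => (k <? line_count fst t y)%nat).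
  assert (Rsplit := nlines_filter_split snd hr t). assert (Csplit := nlines_filter_split fst hc t).
  assert (Rheavy := nlines_mul_le_heavy_part snd k t). assert (Cheavy := nlines_mul_le_heavy_part fst k t).
  fold hr in Rheavy; fold hc in Cheavy.
  assert (Rlight := nlines_le_length snd (filter (fun x => negb (hr x)) t)).
  assert (Clight := nlines_le_length fst (filter (fun x => negb (hc x)) t)).
  assert (Rlen := filter_length hr t). assert (Clen := filter_length hc t).
  assert (Hlight : (length (filter (fun x => negb (hr x)) t) <= length (filter hc t))%nat).
  { apply length_filter_le_imp. intros x Hx E. unfold hr, hc in *.
    destruct (H x Hx) as [Hr|Hc]; apply Nat.ltb_lt in Hr || apply Nat.ltb_lt in Hc.
    - rewrite Hr in E; discriminate.
    - exact Hc. }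
  assert (Hk := Nat.mul_le_mono_l _ _ k (Nat.add_le_mono _ _ _ _ Hlight (Nat.le_refl
    (length (filter (fun x => negb (hc x)) t))))).
  assert (R1 := Nat.mul_le_mono_l _ _ (k + 1) Rsplit). assert (C1 := Nat.mul_le_mono_l _ _ (k + 1) Csplit).
  assert (R2 := Nat.mul_le_mono_l _ _ (k + 1) Rlight). assert (C2 := Nat.mul_le_mono_l _ _ (k + 1) Clight).
  rewrite Clen in Hk. clearbody hr hc. clear H. nia.
Qed.

Definition heavyb (k : nat) (l : list point) (x : point) : bool :=
  (k <? line_count snd l x)%nat || (k <? line_count fst l x)%nat.

Lemma heavyb_iff k l x : heavyb k l x = true <-> heavy k l x.
Proof. unfold heavyb, heavy. rewrite orb_true_iff, !Nat.ltb_lt. tauto. Qed.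

Definition heavy_part (k : nat) (S : list point) : list point := filter (heavyb k S) S.
Definition light_part (k : nat) (S : list point) : list point := filter (fun y => negb (heavyb k S y)) S.

Lemma line_count_heavy_part f k S x :
  (f = snd \/ f = fst) -> (k < line_count f S x)%nat -> line_count f (heavy_part k S) x = line_count f S x.
Proof.
  intros Hf Hx. apply line_count_filter_full. intros y Hy. apply heavyb_iff.
  unfold heavy. destruct Hf; subst; rewrite (line_count_same_line _ S y x Hy); auto.
Qed.

Lemma all_heavy_heavy_part k S : all_heavy k (heavy_part k S).
Proof.
  intros x Hx. apply filter_In in Hx as [_ Hx]. apply heavyb_iff in Hx as [H|H]; [left|right];
    rewrite line_count_heavy_part; auto.
Qed.

Lemma line_count_light_part_le f k S x :
  (f = snd \/ f = fst) -> (line_count f (light_part k S) x <= k)%nat.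
Proof.
  intros Hf. destruct (Nat.lt_ge_cases k (line_count f S x)) as [Hx|Hx].
  - unfold line_count, light_part. rewrite filter_filter_andb, (filter_ext _ (fun _ => false)).
    + rewrite filter_false; simpl; lia.
    + intros y. destruct (f y =? f x) eqn:E; [|apply andb_false_r]. apply Nat.eqb_eq in E.
      rewrite andb_true_r. apply negb_false_iff, heavyb_iff. unfold heavy.
      destruct Hf; subst; rewrite (line_count_same_line _ S y x E); auto.
  - eapply Nat.le_trans; [apply line_count_filter_le|exact Hx].
Qed.

(* [Q] consists of [max 1 (k+1-c)] points of the line of [w] outside [W'],
   where [c] points of that line already lie in [W']. *)
Lemma extend_by_heavy_line k f (W W' : list point) w :
  NoDup W -> NoDup W' -> In w W -> ~ In w W' -> (k < line_count f W w)%nat ->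
  exists Q, NoDup (Q ++ W') /\ incl Q W /\ (1 <= length Q <= k + 1)%nat /\
    (forall q, In q Q -> f q = f w) /\ (k < line_count f (Q ++ W') w)%nat.
Proof.
  intros HW HW' Hw Hw' Hk.
  set (outside := fun y => if in_dec point_eq_dec y W' then false else true).
  set (P := filter (fun y => (f y =? f w) && outside y) W).
  set (c := line_count f W' w).
  assert (HP : forall y, In y P -> In y W /\ f y = f w /\ ~ In y W').
  { intros y Hy. apply filter_In in Hy as [Hy Hb]. apply andb_true_iff in Hb as [He Ho].
    apply Nat.eqb_eq in He. unfold outside in Ho. destruct in_dec; [discriminate|auto]. }
  assert (HwP : In w P).
  { apply filter_In. split; auto. rewrite Nat.eqb_refl. unfold outside. destruct in_dec; tauto. }
  assert (HPlen : (k + 1 <= length P + c)%nat).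
  { enough (line_count f W w <= length P + c)%nat by lia.
    unfold line_count, P, c. rewrite <- (filter_length outside (filter _ W)), !filter_filter_andb.
    apply Nat.add_le_mono_l. apply NoDup_incl_length; [apply NoDup_filter, HW|].
    intros y Hy. apply filter_In in Hy as [Hy Hb]. apply andb_true_iff in Hb as [He Ho].
    apply filter_In. split; auto. unfold outside in Ho. destruct in_dec; [auto|discriminate]. }
  assert (HPnd : NoDup P) by (apply NoDup_filter, HW).
  set (Q := firstn (Nat.max 1 (k + 1 - c)) P).
  assert (HQ : forall q, In q Q -> In q P).
  { intros q Hq. rewrite <- (firstn_skipn (Nat.max 1 (k + 1 - c)) P). apply in_or_app; auto. }
  assert (HQnd : NoDup Q).
  { apply (NoDup_app_remove_r _ (skipn (Nat.max 1 (k + 1 - c)) P)). unfold Q. rewrite firstn_skipn; auto. }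
  assert (HQlen : length Q = Nat.max 1 (k + 1 - c)).
  { unfold Q. rewrite length_firstn. assert (1 <= length P)%nat by (destruct P; [destruct HwP|simpl]; lia). lia. }
  assert (HQline : forall q, In q Q -> f q = f w) by (intros q Hq; apply HP, HQ, Hq).
  exists Q. split; [|split; [|split; [|split]]].
  - apply NoDup_app; auto. intros y Hy. apply HP, HQ, Hy.
  - intros q Hq. apply HP, HQ, Hq.
  - lia.
  - exact HQline.
  - rewrite line_count_app, line_count_on_line by exact HQline. fold c. lia.
Qed.

Lemma all_heavy_app_l k Q W' : all_heavy k W' -> forall x, In x W' -> heavy k (Q ++ W') x.
Proof. intros H x Hx. destruct (H x Hx); [left|right]; rewrite line_count_app; lia. Qed.

Lemma extract_all_heavy k (W : list point) : NoDup W -> all_heavy k W ->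
  forall n, (n <= length W)%nat ->
  exists W', NoDup W' /\ incl W' W /\ (n <= length W' <= n + k)%nat /\ all_heavy k W'.
Proof.
  intros HW Hh n. induction n as [|n IH]; intros Hn.
  - exists []. split; [constructor|]. split; [apply incl_nil_l|]. split; [simpl; lia|intros x []].
  - destruct (IH ltac:(lia)) as [W' [Hnd [Hincl [Hlen Hheavy]]]].
    destruct (Nat.le_gt_cases (S n) (length W')) as [Hle|Hgt].
    + exists W'. split; [|split; [|split]]; auto; lia.
    + assert (Hnew : exists w, In w W /\ ~ In w W').
      { apply NNPP. intros Hne. assert (incl W W').
        { intros z Hz. apply NNPP. intros Hz'. apply Hne. exists z; auto. }
        assert (Hl := NoDup_incl_length HW H). lia. }
      destruct Hnew as [w [Hw Hw']].
      assert (Hf : exists f, (f = snd \/ f = fst) /\ (k < line_count f W w)%nat)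
        by (destruct (Hh w Hw); eauto).
      destruct Hf as [f [Hf Hk]].
      destruct (extend_by_heavy_line k f W W' w HW Hnd Hw Hw' Hk) as [Q [HQnd [HQW [HQlen [HQline HQk]]]]].
      exists (Q ++ W'). split; [|split; [|split]]; auto.
      * apply incl_app; auto.
      * rewrite length_app; lia.
      * intros x Hx. apply in_app_or in Hx as [Hx|Hx]; [|apply all_heavy_app_l; auto].
        rewrite <- (line_count_same_line f (Q ++ W') x w (HQline x Hx)) in HQk.
        destruct Hf; subst; [left|right]; auto.
Qed.

(** * The heavy part of a spanning set *)

Definition zero_width (rs : list (nat * nat)) : nat := fold_right Nat.max 0%nat (map fst rs).
Definition zero_height (rs : list (nat * nat)) : nat := fold_right Nat.max 0%nat (map snd rs).

Lemma le_fold_max (l : list nat) x : In x l -> (x <= fold_right Nat.max 0 l)%nat.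
Proof. induction l as [|y l IH]; simpl; [tauto|]. intros [<-|H]; [|specialize (IH H)]; lia. Qed.

Lemma zero_set_of_bound rs u v :
  zero_set_of rs (u, v) -> (u < zero_width rs /\ v < zero_height rs)%nat.
Proof.
  intros [r [Hr [H1 H2]]]. simpl in *.
  assert (fst r <= zero_width rs)%nat by (apply le_fold_max, in_map, Hr).
  assert (snd r <= zero_height rs)%nat by (apply le_fold_max, in_map, Hr). lia.
Qed.

Definition down_closed (Z : pset) : Prop :=
  forall u v u' v', Z (u, v) -> (u' <= u)%nat -> (v' <= v)%nat -> Z (u', v').

Lemma down_closed_zero_set_of rs : down_closed (zero_set_of rs).
Proof. intros u v u' v' [r [Hr [H1 H2]]] Hu Hv. exists r; split; auto. split; simpl in *; lia. Qed.

Lemma has_card_ge (S : pset) n (l : list point) :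
  has_card S n -> NoDup l -> (forall y, In y l -> S y) -> (length l <= n)%nat.
Proof.
  intros [l' [Hnd [<- Hiff]]] Hl Hy. apply NoDup_incl_length; auto. intros z Hz. apply Hiff; auto.
Qed.

Lemma has_card_of_incl (S : pset) l : (forall y, S y -> In y l) -> exists n, has_card S n /\ (n <= length l)%nat.
Proof.
  intros H.
  set (l' := nodup point_eq_dec (filter (fun y => if excluded_middle_informative (S y) then true else false) l)).
  exists (length l'). split.
  - exists l'. split; [apply NoDup_nodup|split; auto]. intros y.
    unfold l'. rewrite nodup_In, filter_In.
    destruct excluded_middle_informative as [Hy|Hy]; split; [tauto|auto|intros [_ E]; discriminate|tauto].
  - unfold l'. eapply Nat.le_trans; [|apply (filter_length_le (fun y => if excluded_middle_informative (S y) then true else false))].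
    apply NoDup_incl_length; [apply NoDup_nodup|]. intros y; rewrite nodup_In; auto.
Qed.

Lemma T_of_full_row Z A x a (l : list point) :
  (forall u v, Z (u, v) -> (u < a)%nat) -> NoDup l -> length l = a ->
  (forall y, In y l -> A y /\ snd y = snd x) -> T Z A x.
Proof.
  intros HZ Hl Hlen Hrow. destruct (classic (A x)) as [HA|HA]; [left; auto|right; split; auto].
  intros [u [v [Hu [_ Huv]]]]. apply HZ in Huv.
  assert (length l <= u)%nat by exact (has_card_ge _ _ _ Hu Hl Hrow). lia.
Qed.

Lemma T_of_full_col Z A x b (l : list point) :
  (forall u v, Z (u, v) -> (v < b)%nat) -> NoDup l -> length l = b ->
  (forall y, In y l -> A y /\ fst y = fst x) -> T Z A x.
Proof.
  intros HZ Hl Hlen Hcol. destruct (classic (A x)) as [HA|HA]; [left; auto|right; split; auto].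
  intros [u [v [_ [Hv Huv]]]]. apply HZ in Huv.
  assert (length l <= v)%nat by exact (has_card_ge _ _ _ Hv Hl Hcol). lia.
Qed.

Lemma NoDup_map_seq (f : nat -> point) a : (forall i j, f i = f j -> i = j) -> NoDup (map f (seq 0 a)).
Proof. intros Hf. apply Injective_map_NoDup; [exact Hf|apply seq_NoDup]. Qed.

Lemma Titer_le Z A t t' x : (t <= t')%nat -> Titer Z t A x -> Titer Z t' A x.
Proof. induction 1; intros Hx; simpl; auto. left; auto. Qed.

Lemma line_card_of_light k S (B C : pset) x f u :
  (forall y, B y -> C y \/ In y (light_part k S)) -> (f = snd \/ f = fst) ->
  has_card (fun y => C y /\ f y = f x) u ->
  exists n, has_card (fun y => B y /\ f y = f x) n /\ (n <= u + k)%nat.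
Proof.
  intros Hsub Hf [lu [Hnd [Hlen Hiff]]].
  destruct (has_card_of_incl (fun y => B y /\ f y = f x)
              (lu ++ filter (fun y => f y =? f x) (light_part k S))) as [n [Hn Hle]].
  { intros y [By Hy]. apply in_or_app. destruct (Hsub y By) as [Cy|Ly]; [left; apply Hiff; auto|right].
    apply filter_In; split; auto; apply Nat.eqb_eq; auto. }
  exists n; split; auto. rewrite length_app in Hle.
  assert (Hl := line_count_light_part_le f k S x Hf). unfold line_count in Hl. unfold point in *. lia.
Qed.

(* Each line holds at most [k] light points, which the shift of [Z] by [k]
   absorbs. *)
Lemma Titer_heavy_part_or_light Z k S t y :
  down_closed Z -> Titer Z t (in_list S) y ->
  Titer (shiftZ Z k) t (in_list (heavy_part k S)) y \/ In y (light_part k S).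
Proof.
  intros HZ. revert y; induction t as [|t IH]; simpl; intros y Hy.
  - unfold in_list, heavy_part, light_part in *.
    destruct (heavyb k S y) eqn:E; [left|right]; apply filter_In; rewrite ?E; auto.
  - destruct Hy as [Hy|[_ Hno]]; [destruct (IH y Hy); [left; left|right]; auto|].
    destruct (in_dec point_eq_dec y (light_part k S)) as [HL|HL]; [right; auto|left].
    destruct (classic (Titer (shiftZ Z k) t (in_list (heavy_part k S)) y)) as [HC|HC];
      [left; auto|right; split; auto].
    intros [u [v [Hu [Hv Huv]]]]. apply Hno.
    destruct (line_card_of_light k S _ _ y snd u IH (or_introl eq_refl) Hu) as [n1 [Hn1 Hl1]].
    destruct (line_card_of_light k S _ _ y fst v IH (or_intror eq_refl) Hv) as [n2 [Hn2 Hl2]].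
    exists n1, n2. split; [exact Hn1|split; [exact Hn2|]].
    unfold shiftZ in Huv; simpl in Huv. eapply HZ; eauto.
Qed.

(* A light point is reached through its row, far to the right of all light
   points, where every point is eventually infected. *)
Lemma spans_heavy_part rs k A :
  spans (zero_set_of rs) (in_list A) -> spans (shiftZ (zero_set_of rs) k) (in_list (heavy_part k A)).
Proof.
  intros Hsp.
  set (Zk := shiftZ (zero_set_of rs) k). set (W := in_list (heavy_part k A)).
  assert (Hnot_light : forall y, ~ In y (light_part k A) -> exists t, Titer Zk t W y).
  { intros y Hy. destruct (Hsp y) as [t Ht]. exists t.
    destruct (Titer_heavy_part_or_light _ k A t y (down_closed_zero_set_of rs) Ht); auto; contradiction. }
  intros x. destruct (in_dec point_eq_dec x (light_part k A)) as [HL|HL]; [|auto].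
  set (x0 := S (fold_right Nat.max 0%nat (map fst (light_part k A)))).
  assert (Hfar : forall m, ~ In (x0 + m, snd x)%nat (light_part k A)).
  { intros m Hm. assert (H := le_fold_max _ _ (in_map fst _ _ Hm)). simpl in H. unfold x0 in H. lia. }
  assert (Hrow : forall c, exists t, forall m, (m < c)%nat -> Titer Zk t W (x0 + m, snd x)%nat).
  { induction c as [|c [t Ht]]; [exists 0%nat; intros; lia|].
    destruct (Hnot_light _ (Hfar c)) as [t' Ht']. exists (t + t')%nat. intros m Hm.
    destruct (Nat.eq_dec m c) as [->|Hne]; [apply (Titer_le _ _ t')|apply (Titer_le _ _ t)];
      auto; [lia|lia|apply Ht; lia]. }
  destruct (Hrow (zero_width rs)) as [t Ht]. exists (S t). simpl.
  apply (T_of_full_row _ _ _ (zero_width rs) (map (fun m => (x0 + m, snd x)%nat) (seq 0 (zero_width rs)))).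
  - intros u v Huv. apply zero_set_of_bound in Huv. simpl in Huv. lia.
  - apply NoDup_map_seq. intros i j E; injection E; lia.
  - rewrite length_map, length_seq; auto.
  - intros y Hy. apply in_map_iff in Hy as [m [<- Hm]]. apply in_seq in Hm. split; auto. apply Ht; lia.
Qed.

Lemma spanning_all_heavy_subset rs k S g :
  NoDup S -> spans (zero_set_of rs) (in_list S) -> is_gamma (shiftZ (zero_set_of rs) k) g ->
  exists W, NoDup W /\ incl W S /\ (g <= length W <= g + k)%nat /\ all_heavy k W.
Proof.
  intros HS Hsp [_ Hg].
  assert (Hnd : NoDup (heavy_part k S)) by (apply NoDup_filter, HS).
  assert (Hlen : (g <= length (heavy_part k S))%nat) by (apply Hg; auto; apply spans_heavy_part, Hsp).
  destruct (extract_all_heavy k _ Hnd (all_heavy_heavy_part k S) g Hlen) as [W [H1 [H2 [H3 H4]]]].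
  exists W. split; [|split]; auto. intros z Hz. apply H2 in Hz. apply filter_In in Hz; tauto.
Qed.

(** * The union bound *)

Lemma in_grid N M i j : In (i, j) (grid N M) <-> (i < N /\ j < M)%nat.
Proof. unfold grid. rewrite in_prod_iff, !in_seq. lia. Qed.

Lemma length_grid N M : length (grid N M) = (N * M)%nat.
Proof. unfold grid, point. rewrite length_prod, !length_seq; auto. Qed.

Lemma NoDup_grid N M : NoDup (grid N M).
Proof.
  unfold grid. generalize (seq_NoDup N 0) (seq_NoDup M 0).
  generalize (seq 0 N) (seq 0 M). intros a b Ha Hb. induction Ha as [|i a Hi Ha IH]; simpl; [constructor|].
  apply NoDup_app; auto.
  - apply Injective_map_NoDup; auto. intros u v E; injection E; auto.
  - intros [x y] Hx Hin. apply in_map_iff in Hx as [z [E _]]. injection E; intros; subst.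
    apply in_prod_iff in Hin. tauto.
Qed.

(* Once the box holds the whole bounding box of [Z], every row of it fills up
   in one step, and then every column. *)
Lemma spans_grid rs N M :
  (zero_width rs <= N)%nat -> (zero_height rs <= M)%nat -> spans (zero_set_of rs) (in_list (grid N M)).
Proof.
  intros HN HM.
  set (G := in_list (grid N M)).
  assert (Hrows : forall i j, (j < M)%nat -> Titer (zero_set_of rs) 1 G (i, j)).
  { intros i j Hj.
    apply (T_of_full_row _ _ _ (zero_width rs) (map (fun a => (a, j)) (seq 0 (zero_width rs)))).
    - intros u v Huv. apply (zero_set_of_bound _ _ _ Huv).
    - apply NoDup_map_seq. intros a b E; injection E; auto.
    - rewrite length_map, length_seq; auto.
    - intros y Hy. apply in_map_iff in Hy as [a [<- Ha]]. apply in_seq in Ha.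
      split; auto. apply in_grid; lia. }
  intros [i j]. exists 2%nat.
  apply (T_of_full_col _ _ _ (zero_height rs) (map (fun b => (i, b)) (seq 0 (zero_height rs)))).
  - intros u v Huv. apply (zero_set_of_bound _ _ _ Huv).
  - apply NoDup_map_seq. intros a b E; injection E; auto.
  - rewrite length_map, length_seq; auto.
  - intros y Hy. apply in_map_iff in Hy as [b [<- Hb]]. apply in_seq in Hb.
    split; auto. apply Hrows; lia.
Qed.

Lemma prob_span_eq Z p N M :
  prob_span Z p N M
  = rsum (fun S => indicator (spans Z (in_list S)) * subset_weight p (N * M) S) (powerset (grid N M)).
Proof. unfold prob_span, rsum, subset_weight. f_equal. apply map_ext. intros; ring. Qed.

Lemma prob_span_le_1 Z p N M : 0 < p < 1 -> prob_span Z p N M <= 1.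
Proof.
  intros Hp. rewrite prob_span_eq.
  apply Rle_trans with (p ^ length (@nil point)); [|simpl; lra].
  rewrite <- (sum_powerset_superset p (grid N M) []); [|apply NoDup_grid|constructor|apply incl_nil_l].
  rewrite length_grid. apply rsum_le. intros S _. rewrite (indicator_true (incl [] S)) by apply incl_nil_l.
  assert (Hw := subset_weight_nonneg p (N * M) S Hp).
  assert (H1 := indicator_bounds (spans Z (in_list S))). nra.
Qed.

Lemma prob_span_pos rs p N M :
  0 < p < 1 -> (zero_width rs <= N)%nat -> (zero_height rs <= M)%nat ->
  0 < prob_span (zero_set_of rs) p N M.
Proof.
  intros Hp HN HM. rewrite prob_span_eq.
  apply Rlt_le_trans with
    (indicator (spans (zero_set_of rs) (in_list (grid N M))) * subset_weight p (N * M) (grid N M));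
    [|apply (rsum_ge_term (fun S => indicator (spans (zero_set_of rs) (in_list S)) * subset_weight p (N * M) S))].
  - rewrite indicator_true by (apply spans_grid; auto). unfold subset_weight.
    rewrite Rmult_1_l. apply Rmult_lt_0_compat; apply pow_lt; lra.
  - intros S _. apply Rmult_le_pos; [apply indicator_bounds|apply subset_weight_nonneg, Hp].
  - apply in_powerset_self.
Qed.

Definition good (k : nat) (t : list point) : Prop := NoDup t /\ all_heavy k t.

Lemma indicator_spans_le_good_subsets rs k g N M S :
  In S (powerset (grid N M)) -> is_gamma (shiftZ (zero_set_of rs) k) g ->
  indicator (spans (zero_set_of rs) (in_list S)) <=
  rsum (fun s => rsum (fun t => indicator (good k t) * indicator (incl t S)) (tuples (grid N M) s))
       (seq g (k + 1)).
Proof.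
  intros HS Hg. set (term := fun t => indicator (good k t) * indicator (incl t S)).
  assert (Hterm : forall t, 0 <= term t)
    by (intros; apply Rmult_le_pos; apply indicator_bounds).
  destruct (classic (spans (zero_set_of rs) (in_list S))) as [Hsp|Hsp].
  - rewrite indicator_true by exact Hsp.
    assert (HSnd := in_powerset_NoDup _ _ (NoDup_grid N M) HS).
    destruct (spanning_all_heavy_subset rs k S g HSnd Hsp Hg) as [W [HWnd [HWS [HWlen HWh]]]].
    apply Rle_trans with (rsum term (tuples (grid N M) (length W))).
    + apply Rle_trans with (term W); [unfold term; rewrite !indicator_true; [lra|auto|split; auto]|].
      apply rsum_ge_term; auto. apply in_tuples_iff. split; auto.
      intros z Hz; apply (in_powerset_incl _ _ HS), HWS, Hz.
    + apply (rsum_ge_term (fun s => rsum term (tuples (grid N M) s))).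
      * intros; apply rsum_nonneg; auto.
      * apply in_seq; lia.
  - rewrite indicator_false by exact Hsp.
    apply rsum_nonneg; intros; apply rsum_nonneg; auto.
Qed.

Lemma prob_span_le_good_tuples rs k g p N M :
  0 < p < 1 -> is_gamma (shiftZ (zero_set_of rs) k) g ->
  prob_span (zero_set_of rs) p N M <=
  rsum (fun s => rsum (fun t => indicator (good k t) * p ^ length t) (tuples (grid N M) s)) (seq g (k + 1)).
Proof.
  intros Hp Hg. rewrite prob_span_eq. set (w := subset_weight p (N * M)).
  eapply Rle_trans.
  { apply rsum_le. intros S HS. apply Rmult_le_compat_r; [apply subset_weight_nonneg, Hp|].
    apply (indicator_spans_le_good_subsets rs k g N M S HS Hg). }
  apply Req_le. rewrite (rsum_ext_in _ (fun S => rsum (fun s => rsum (fun t =>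
      indicator (good k t) * (indicator (incl t S) * w S)) (tuples (grid N M) s)) (seq g (k + 1)))).
  2:{ intros S _. rewrite Rmult_comm, <- rsum_scal. apply rsum_ext_in. intros s _.
      rewrite <- rsum_scal. apply rsum_ext_in. intros t _. ring. }
  rewrite rsum_swap. apply rsum_ext_in. intros s _. rewrite rsum_swap. apply rsum_ext_in.
  intros t Ht. rewrite rsum_scal. destruct (classic (good k t)) as [Hgd|Hgd].
  - f_equal. unfold w. rewrite <- (length_grid N M).
    apply in_tuples_iff in Ht as [_ Ht].
    apply sum_powerset_superset; [apply NoDup_grid|apply Hgd|exact Ht].
  - rewrite !indicator_false by exact Hgd. ring.
Qed.

(* By [nlines_all_heavy_le] a good set of size [s] meets at most [a s] lines,
   [a = 1 + 1/(k+1)]. *)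
Lemma good_line_weight_ge k t L :
  1 <= L -> good k t ->
  1 <= Rpower L ((1 + 1 / INR (k + 1)) * INR (length t)) * line_weight (/ L) t.
Proof.
  intros HL [_ Hh]. assert (Hk : 0 < INR (k + 1)) by (apply lt_0_INR; lia).
  assert (HD : INR (nlines fst t + nlines snd t) <= (1 + 1 / INR (k + 1)) * INR (length t)).
  { assert (Hc := le_INR _ _ (nlines_all_heavy_le k t Hh)). rewrite !mult_INR in Hc.
    replace (INR (k + 2)) with (INR (k + 1) + 1) in Hc by (rewrite !plus_INR; simpl; ring).
    apply Rmult_le_reg_l with (INR (k + 1)); auto. field_simplify; lra. }
  unfold line_weight. rewrite pow_inv, <- Rpower_pow by lra.
  apply (Rle_Rpower L) in HD; [|exact HL].
  assert (0 < Rpower L (INR (nlines fst t + nlines snd t))) by apply exp_pos.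
  apply Rmult_le_reg_r with (Rpower L (INR (nlines fst t + nlines snd t))); auto.
  rewrite Rmult_assoc, Rinv_l; lra.
Qed.

Lemma rsum_good_tuples_le k s N M p L :
  0 < p < 1 -> 1 <= L -> INR N <= L -> INR M <= L ->
  rsum (fun t => indicator (good k t) * p ^ length t) (tuples (grid N M) s) <=
  (p * Rpower L (1 + 1 / INR (k + 1))) ^ s * INR (fact s) ^ 2.
Proof.
  intros Hp HL HN HM.
  set (E := Rpower L ((1 + 1 / INR (k + 1)) * INR s)).
  assert (HE : (p * Rpower L (1 + 1 / INR (k + 1))) ^ s = p ^ s * E).
  { unfold E. rewrite Rpow_mult_distr, <- (Rpower_pow s (Rpower L _)), Rpower_mult by apply exp_pos.
    reflexivity. }
  assert (HE0 : 0 < E) by apply exp_pos.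
  rewrite HE. apply Rle_trans with (rsum (fun t => p ^ s * E * line_weight (/ L) t) (tuples (grid N M) s)).
  - apply rsum_le. intros t Ht. apply in_tuples_iff in Ht as [Hlen _]. rewrite Hlen.
    assert (0 < p ^ s) by (apply pow_lt; lra).
    assert (0 <= line_weight (/ L) t) by (apply pow_le; left; apply Rinv_0_lt_compat; lra).
    destruct (classic (good k t)) as [Hg|Hg].
    + rewrite indicator_true by exact Hg. assert (H1 := good_line_weight_ge k t L HL Hg).
      rewrite Hlen in H1. fold E in H1. nra.
    + rewrite indicator_false by exact Hg. rewrite Rmult_0_l. apply Rmult_le_pos; [nra|auto].
  - rewrite rsum_scal. apply Rmult_le_compat_l; [left; apply Rmult_lt_0_compat; auto; apply pow_lt; lra|].
    assert (HL0 : 0 < L) by lra.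
    apply rsum_line_weight_tuples_le; [left; apply Rinv_0_lt_compat; auto| |];
      apply Rmult_le_reg_r with L; auto; rewrite Rmult_assoc, Rinv_l; lra.
Qed.

Definition span_constant (k g : nat) : R := rsum (fun s => INR (fact s) ^ 2) (seq g (k + 1)).

Lemma span_constant_pos k g : 0 < span_constant k g.
Proof.
  unfold span_constant. rewrite Nat.add_1_r. simpl seq. rewrite rsum_cons.
  assert (0 < INR (fact g) ^ 2) by (apply pow_lt, lt_0_INR, lt_O_fact).
  assert (0 <= rsum (fun s => INR (fact s) ^ 2) (seq (S g) k)) by (apply rsum_nonneg; intros; apply pow2_ge_0).
  lra.
Qed.

Lemma prob_span_le_pow rs k g p N M L :
  0 < p < 1 -> is_gamma (shiftZ (zero_set_of rs) k) g ->
  1 <= L -> INR N <= L -> INR M <= L -> p * Rpower L (1 + 1 / INR (k + 1)) <= 1 ->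
  prob_span (zero_set_of rs) p N M <= span_constant k g * (p * Rpower L (1 + 1 / INR (k + 1))) ^ g.
Proof.
  intros Hp Hg HL HN HM Hq. set (q := p * Rpower L (1 + 1 / INR (k + 1))) in *.
  assert (Hq0 : 0 < q) by (apply Rmult_lt_0_compat; [lra|apply exp_pos]).
  eapply Rle_trans; [apply (prob_span_le_good_tuples rs k g p N M Hp Hg)|].
  unfold span_constant. rewrite Rmult_comm, <- rsum_scal. apply rsum_le. intros s Hs. apply in_seq in Hs.
  eapply Rle_trans; [apply (rsum_good_tuples_le k s N M p L Hp HL HN HM)|]. fold q.
  apply Rmult_le_compat_r; [apply pow2_ge_0|].
  replace s with (g + (s - g))%nat by lia. rewrite pow_add.
  assert (0 < q ^ g) by (apply pow_lt; auto).
  assert (q ^ (s - g) <= 1) by (rewrite <- (pow1 (s - g)); apply pow_incr; lra). nra.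
Qed.

(** * Passing to the limit *)

Lemma ln_le_mono x y : 0 < x -> x <= y -> ln x <= ln y.
Proof. intros Hx [H|<-]; [left; apply ln_increasing|]; lra. Qed.

Lemma ln_lt_0 x : 0 < x < 1 -> ln x < 0.
Proof. intros H. rewrite <- ln_1. apply ln_increasing; lra. Qed.

(* [ln x = 0] for [x <= 0], so no positivity hypothesis is needed. *)
Lemma ln_le_0 x : x <= 1 -> ln x <= 0.
Proof.
  intros H. destruct (Rlt_dec 0 x) as [Hx|Hx]; [rewrite <- ln_1; apply ln_le_mono; lra|].
  unfold ln. destruct (Rlt_dec 0 x); [contradiction|lra].
Qed.

Lemma Rdist_lt_bounds x y e : R_dist x y < e -> y - e < x < y + e.
Proof. unfold R_dist, Rabs. destruct Rcase_abs; lra. Qed.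

Lemma Un_cv_const c : Un_cv (fun _ => c) c.
Proof. intros e He. exists 0%nat. intros n _. unfold R_dist. rewrite Rminus_diag, Rabs_R0; auto. Qed.

Lemma Un_cv_le_eventually u v l l' :
  Un_cv u l -> Un_cv v l' -> (exists n0, forall n, (n0 <= n)%nat -> v n <= u n) -> l' <= l.
Proof.
  intros Hu Hv [n0 H]. apply Rnot_lt_le. intros Hlt.
  set (e := (l' - l) / 2). assert (He : 0 < e) by (unfold e; lra).
  destruct (Hu e He) as [n1 H1]. destruct (Hv e He) as [n2 H2].
  set (n := Nat.max n0 (Nat.max n1 n2)).
  assert (A := Rdist_lt_bounds _ _ _ (H1 n ltac:(unfold n; lia))).
  assert (B := Rdist_lt_bounds _ _ _ (H2 n ltac:(unfold n; lia))).
  assert (C := H n ltac:(unfold n; lia)). unfold e in *. lra.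
Qed.

Lemma Un_cv_eventually_lt u l c : Un_cv u l -> l < c -> exists n0, forall n, (n0 <= n)%nat -> u n < c.
Proof.
  intros Hu Hlc. destruct (Hu (c - l)) as [n0 H0]; [lra|].
  exists n0. intros n Hn. assert (H := Rdist_lt_bounds _ _ _ (H0 n Hn)). lra.
Qed.

Lemma Un_cv_Rmax x y a b : Un_cv x a -> Un_cv y b -> Un_cv (fun n => Rmax (x n) (y n)) (Rmax a b).
Proof.
  intros Hx Hy e He. destruct (Hx e He) as [n1 H1]. destruct (Hy e He) as [n2 H2].
  exists (Nat.max n1 n2). intros n Hn.
  assert (A := Rdist_lt_bounds _ _ _ (H1 n ltac:(lia))).
  assert (B := Rdist_lt_bounds _ _ _ (H2 n ltac:(lia))).
  unfold R_dist, Rabs, Rmax. destruct (Rle_dec (x n) (y n)), (Rle_dec a b), Rcase_abs; lra.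
Qed.

Lemma Un_cv_inv_ln p : (forall n, 0 < p n < 1) -> Un_cv p 0 -> Un_cv (fun n => / ln (p n)) 0.
Proof.
  intros Hp Hc e He. destruct (Hc (exp (- / e)) (exp_pos _)) as [n0 H0]. exists n0. intros n Hn.
  assert (A := Rdist_lt_bounds _ _ _ (H0 n Hn)). specialize (Hp n).
  assert (B : ln (p n) < - / e) by (rewrite <- (ln_exp (- / e)); apply ln_increasing; lra).
  assert (Hl := ln_lt_0 _ Hp). assert (0 < / e) by (apply Rinv_0_lt_compat; auto).
  unfold R_dist. rewrite Rminus_0_r, Rabs_left by (apply Rinv_lt_0_compat; auto).
  rewrite <- Rinv_opp, <- (Rinv_inv e). apply Rinv_lt_contravar; nra.
Qed.

Lemma Rmax_ln_div N M d : (1 <= N)%nat -> (1 <= M)%nat -> 0 < d ->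
  Rmax (ln (INR N) / d) (ln (INR M) / d) = ln (INR (Nat.max N M)) / d.
Proof.
  intros HN HM Hd. assert (1 <= INR N) by (apply (le_INR 1); lia). assert (1 <= INR M) by (apply (le_INR 1); lia).
  assert (Hdiv : forall x y, 0 < x -> x <= y -> ln x / d <= ln y / d).
  { intros x y Hx Hxy. apply Rmult_le_compat_r; [left; apply Rinv_0_lt_compat, Hd|apply ln_le_mono; auto]. }
  destruct (Nat.le_ge_cases N M) as [Hle|Hle].
  - rewrite Nat.max_r, Rmax_right by first [assumption | apply Hdiv; [lra|apply le_INR; auto]]. reflexivity.
  - rewrite Nat.max_l, Rmax_left by first [assumption | apply Hdiv; [lra|apply le_INR; auto]]. reflexivity.
Qed.

Lemma log_ratio_prob_span_nonneg Z p N M : 0 < p < 1 -> 0 <= ln (prob_span Z p N M) / ln p.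
Proof.
  intros Hp. assert (H1 := ln_le_0 _ (prob_span_le_1 Z p N M Hp)).
  assert (H2 := Rinv_lt_0_compat _ (ln_lt_0 _ Hp)). unfold Rdiv. nra.
Qed.

(* With [L = max(N, M)] and [e = ln L / -ln p], the bound of
   [prob_span_le_pow] reads [P <= C p^(g (1 - a e))]. *)
Lemma log_ratio_prob_span_ge rs k g p N M :
  0 < p < 1 -> is_gamma (shiftZ (zero_set_of rs) k) g ->
  (Nat.max (zero_width rs) 1 <= N)%nat -> (Nat.max (zero_height rs) 1 <= M)%nat ->
  let a := 1 + 1 / INR (k + 1) in
  let e := Rmax (ln (INR N) / - ln p) (ln (INR M) / - ln p) in
  a * e <= 1 ->
  ln (span_constant k g) / ln p + INR g * (1 - a * e) <= ln (prob_span (zero_set_of rs) p N M) / ln p.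
Proof.
  intros Hp Hg HN HM a e Hae.
  assert (Hlp := ln_lt_0 _ Hp).
  set (L := INR (Nat.max N M)).
  assert (HL : 1 <= L) by (apply (le_INR 1); lia).
  assert (He : e = ln L / - ln p) by (apply Rmax_ln_div; lia || lra).
  assert (HlnL : ln L = - ln p * e) by (rewrite He; field; lra).
  assert (Hq : p * Rpower L a <= 1).
  { assert (0 < Rpower L a) by apply exp_pos. apply Rnot_lt_le. intros Hgt.
    apply ln_increasing in Hgt; [|lra]. rewrite ln_1, ln_mult, ln_Rpower, HlnL in Hgt by lra. nra. }
  assert (HP := prob_span_le_pow rs k g p N M L Hp Hg HL
                  ltac:(apply le_INR; lia) ltac:(apply le_INR; lia) Hq).
  assert (HP0 := prob_span_pos rs p N M Hp ltac:(lia) ltac:(lia)).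
  assert (HC := span_constant_pos k g).
  assert (Hln : ln (prob_span (zero_set_of rs) p N M) <= ln (span_constant k g) + INR g * (ln p + a * ln L)).
  { eapply Rle_trans; [apply ln_le_mono; [exact HP0|exact HP]|].
    assert (0 < Rpower L a) by apply exp_pos.
    assert (Hq0 : 0 < p * Rpower L a) by nra.
    rewrite ln_mult, ln_pow, ln_mult, ln_Rpower by (auto; lra || apply pow_lt, Hq0). unfold a; lra. }
  rewrite HlnL in Hln.
  assert (Hinv : / ln p < 0) by (apply Rinv_lt_0_compat; auto).
  replace (ln (span_constant k g) / ln p + INR g * (1 - a * e)) with
    ((ln (span_constant k g) + INR g * (ln p + a * (- ln p * e))) * / ln p) by (field; lra).
  unfold Rdiv. rewrite !(Rmult_comm _ (/ ln p)). apply Rmult_le_compat_neg_l; lra.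
Qed.

Theorem mainTheorem14 :
  forall (rs : list (nat * nat)) (k : nat) (alpha beta : R),
    0 <= alpha <= 1 -> 0 <= beta <= 1 ->
    forall g : nat, is_gamma (shiftZ (zero_set_of rs) k) g ->
    forall (p : nat -> R) (N M : nat -> nat) (I : R),
      (forall n, 0 < p n < 1) ->
      Un_cv p 0 ->
      tends_to_infty N -> tends_to_infty M ->
      Un_cv (fun n => ln (INR (N n)) / (- ln (p n))) alpha ->
      Un_cv (fun n => ln (INR (M n)) / (- ln (p n))) beta ->
      Un_cv (fun n => ln (prob_span (zero_set_of rs) (p n) (N n) (M n)) / ln (p n)) I ->
      I >= INR g * (1 - Rmax alpha beta * (1 + 1 / INR (k + 1))).
Proof.
  intros rs k alpha beta _ _ g Hg p N M I Hp Hp0 HN HM Halpha Hbeta HI.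
  set (a := 1 + 1 / INR (k + 1)). set (m := Rmax alpha beta).
  set (e := fun n => Rmax (ln (INR (N n)) / - ln (p n)) (ln (INR (M n)) / - ln (p n))).
  assert (He : Un_cv e m) by (apply Un_cv_Rmax; auto).
  apply Rle_ge. replace (m * a) with (a * m) by ring.
  destruct (Rle_lt_dec (INR g * (1 - a * m)) 0) as [Hle|Hlt].
  - apply Rle_trans with 0; [exact Hle|]. apply (Un_cv_le_eventually _ _ _ _ HI (Un_cv_const 0)).
    exists 0%nat. intros n _. apply log_ratio_prob_span_nonneg, Hp.
  - set (C := span_constant k g).
    replace (INR g * (1 - a * m)) with (ln C * 0 + INR g * (1 - a * m)) by ring.
    apply (Un_cv_le_eventually _ (fun n => ln C * / ln (p n) + INR g * (1 - a * e n)) _ _ HI).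
    { apply CV_plus; apply CV_mult; try apply Un_cv_const; [apply Un_cv_inv_ln; auto|].
      apply (CV_minus (fun _ => 1)); [apply Un_cv_const|apply CV_mult; auto; apply Un_cv_const]. }
    assert (Ham : a * m < 1) by (assert (0 <= INR g) by apply pos_INR; nra).
    destruct (Un_cv_eventually_lt (fun n => a * e n) (a * m) 1) as [n1 H1]; auto.
    { apply CV_mult; auto. apply Un_cv_const. }
    destruct (HN (Nat.max (zero_width rs) 1)) as [n2 H2]. destruct (HM (Nat.max (zero_height rs) 1)) as [n3 H3].
    exists (Nat.max n1 (Nat.max n2 n3)). intros n Hn.
    apply (log_ratio_prob_span_ge rs k g (p n) (N n) (M n)); auto; [apply H2|apply H3|left; apply H1]; lia.
Qed.
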